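(* Let $(\Omega,\Sigma,\mathbb{P})$ be an admissible measure space where $\mathbb{P}$ is a probability measure without atoms, and let $\mathcal{J}(\mathbb{P})$ be the set of all Banach ideal spaces $E$ on $(\Omega,\Sigma,\mathbb{P})$ of maximal width satisfying the norming condition $\|\chi_\Omega\|_E=1$ (spaces $E,F$ identified when $E\subset^1F$ and $F\subset^1E$). Then the lattice $\langle\mathcal{J}(\mathbb{P}),\vee,\wedge\rangle$, with $E\vee F=E+F$ and $E\wedge F=E\cap F$ (ordered by $\subset^{1}$), is Dedekind complete.
   Context: $L_0(\mathbb{P})$ is the vector lattice of classes of measurable real functions on $\Omega$, ordered a.e.; $\chi_A$ is the indicator function of $A$. Admissible measure space: $\mu$ complete; a set $A\subset\Omega$ with $A\cap B\in\Sigma$ for all $B\in\Sigma$ of finite measure lies in $\Sigma$; $\mu$ semifinite; $\mu$ has the direct sum property (a family of pairwise disjoint finite-measure sets $A_i$ such that each finite-measure $B$ is, up to a null set, a countable union of sets $B\cap A_i$). A Banach ideal space (BIS) is a vector subspace $E\subset L_0$ with complete norm such that $y\in E$, $|x|\le|y|$ a.e. imply $x\in E$, $\|x\|_E\le\|y\|_E$. Maximal width: the only $z\in L_0$ with $zy=0$ for all $y\in E$ is $z=0$. $E\subset^1F$: $E\subseteq F$ and $\|x\|_F\le\|x\|_E$ for $x\in E$. $\|x\|_{E\cap F}=\max\{\|x\|_E,\|x\|_F\}$; $\|x\|_{E+F}=\inf\{\|u\|_E+\|v\|_F:u+v=x\}$. Dedekind complete: every nonempty subset bounded above has a least upper bound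 and every nonempty subset bounded below has a greatest lower bound in $\langle\mathcal{J}(\mathbb{P}),\subset^1\rangle$. *)

From HB Require Import structures.
From mathcomp Require Import all_boot all_order all_algebra.
From mathcomp Require Import all_classical all_reals all_analysis.
Set Implicit Arguments. Unset Strict Implicit. Unset Printing Implicit Defensive.
Import Order.TTheory GRing.Theory Num.Theory.
Local Open Scope classical_set_scope.
Local Open Scope ring_scope.

(* Elements of L_0(P) are represented by
   measurable functions T -> R; all notions below are invariant under
   a.e. equality, so they are notions on classes. *)

Section Defs.
Context d (T : measurableType d) (R : realType).

Definition admissible (mu : {measure set T -> \bar R}) : Prop :=
  measure_is_complete mu /\
  (forall A : set T,
      (forall B, measurable B -> (mu B < +oo)%E -> measurable (A `&` B)) ->
      measurable A) /\
  (forall A, measurable A -> mu A = +oo%E ->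
      exists B, [/\ measurable B, B `<=` A, (0 < mu B)%E & (mu B < +oo)%E]) /\
  (exists F : set (set T),
      (forall A, F A -> measurable A /\ (mu A < +oo)%E) /\
      (forall A B, F A -> F B -> A <> B -> A `&` B = set0) /\
      (forall B, measurable B -> (mu B < +oo)%E ->
         exists J : set (set T), [/\ J `<=` F, countable J &
           mu.-negligible (B `\` \bigcup_(A in J) (B `&` A))])).

Definition atomless (mu : {measure set T -> \bar R}) : Prop :=
  forall A, measurable A -> (0 < mu A)%E ->
    exists B, [/\ measurable B, B `<=` A, (0 < mu B)%E & (mu B < mu A)%E].

Variable mu : {measure set T -> \bar R}.

Definition L0 (x : T -> R) : Prop := measurable_fun setT x.

Definition is_BIS (E : set (T -> R)) (N : (T -> R) -> R) : Prop :=
  E `<=` L0 /\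
      E (fun=> 0) /\
      (forall x y, E x -> E y -> E (x \+ y)) /\
      (forall (a : R) x, E x -> E (fun t => a * x t)) /\
      (forall x, E x -> 0 <= N x) /\
      (forall x, E x -> (N x = 0 <-> {ae mu, forall t, x t = 0})) /\
      (forall (a : R) x, E x -> N (fun t => a * x t) = `|a| * N x) /\
      (forall x y, E x -> E y -> N (x \+ y) <= N x + N y) /\
      (forall x y, L0 x -> E y -> {ae mu, forall t, `|x t| <= `|y t|} ->
          E x /\ N x <= N y) /\
      (forall u : nat -> T -> R, (forall n, E (u n)) ->
         (forall e : R, 0 < e -> exists n0, forall m k, (n0 <= m)%N -> (n0 <= k)%N ->
             N (u m \- u k) < e) ->
         exists x, E x /\ forall e : R, 0 < e -> exists n0, forall m, (n0 <= m)%N ->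
             N (u m \- x) < e).

Record BIS := MkBIS { bis_set : set (T -> R); bis_norm : (T -> R) -> R }.

Definition maximal_width (E : BIS) : Prop :=
  forall z, L0 z -> (forall y, bis_set E y -> {ae mu, forall t, z t * y t = 0}) ->
    {ae mu, forall t, z t = 0}.

Definition sub1 (E F : BIS) : Prop :=
  bis_set E `<=` bis_set F /\
  forall x, bis_set E x -> bis_norm F x <= bis_norm E x.

Definition inJ (E : BIS) : Prop :=
  [/\ is_BIS (bis_set E) (bis_norm E), maximal_width E,
      bis_set E (fun=> 1) & bis_norm E (fun=> 1) = 1].

(* Dedekind completeness of <J(P), \subset^1> (J(P) taken modulo the
   identification E ~ F iff E \subset^1 F and F \subset^1 E; a subset of the
   quotient is represented by a family S of members of J(P)). *)
Definition is_upper (S : set BIS) (U : BIS) := forall E, S E -> sub1 E U.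
Definition is_lower (S : set BIS) (L : BIS) := forall E, S E -> sub1 L E.

Definition dedekind_complete_J : Prop :=
  (forall S : set BIS, S `<=` inJ -> S !=set0 ->
     (exists U, inJ U /\ is_upper S U) ->
     exists U, [/\ inJ U, is_upper S U &
                   forall V, inJ V -> is_upper S V -> sub1 U V]) /\
  (forall S : set BIS, S `<=` inJ -> S !=set0 ->
     (exists L, inJ L /\ is_lower S L) ->
     exists L, [/\ inJ L, is_lower S L &
                   forall V, inJ V -> is_lower S V -> sub1 V L]).
End Defs.

(* A nonempty family F in J(P) has a greatest lower bound: the functions lying
   in every member of F with uniformly bounded norms, normed by the supremum of
   the norms.  Everything is inherited pointwise from the members except
   completeness: a Cauchy sequence has a limit in each member, and these limits
   agree a.e. by the Riesz-Fischer argument (a fast subsequence converges a.e.).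
   A family bounded above then has as least upper bound the greatest lower bound
   of its upper bounds. *)

From HB Require Import structures.
From mathcomp Require Import all_boot all_order all_algebra.
From mathcomp Require Import all_classical all_reals all_analysis measurable_realfun.
From mathcomp Require Import lra.
Import Order.TTheory GRing.Theory Num.Theory.
Set Implicit Arguments. Unset Strict Implicit. Unset Printing Implicit Defensive.
Local Open Scope classical_set_scope.
Local Open Scope ring_scope.

Definition norm_cauchy {T : Type} {R : numDomainType}
    (N : (T -> R) -> R) (u : nat -> T -> R) : Prop :=
  forall e : R, 0 < e -> exists n0, forall m k, (n0 <= m)%N -> (n0 <= k)%N ->
    N (u m \- u k) < e.

Definition norm_cvg {T : Type} {R : numDomainType}
    (N : (T -> R) -> R) (u : nat -> T -> R) (x : T -> R) : Prop :=
  forall e : R, 0 < e -> exists n0, forall m, (n0 <= m)%N -> N (u m \- x) < e.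

Section BanachIdealSpace.
Context d (T : measurableType d) (R : realType) (mu : {measure set T -> \bar R}).
Variables (E : set (T -> R)) (N : (T -> R) -> R).
Hypothesis bisE : is_BIS mu E N.

Lemma bis_L0 x : E x -> L0 x.
Proof. by case: bisE => H _; apply: H. Qed.

Lemma bis0 : E (fun=> 0).
Proof. by case: bisE => _ []. Qed.

Lemma bisD x y : E x -> E y -> E (x \+ y).
Proof. by case: bisE => _ [_ [H _]]; apply: H. Qed.

Lemma bisZ a x : E x -> E (fun t => a * x t).
Proof. by case: bisE => _ [_ [_ [H _]]]; apply: H. Qed.

Lemma bis_norm_ge0 x : E x -> 0 <= N x.
Proof. by case: bisE => _ [_ [_ [_ [H _]]]]; apply: H. Qed.

Lemma bis_norm_eq0 x : E x -> (N x = 0 <-> {ae mu, forall t, x t = 0}).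
Proof. by case: bisE => _ [_ [_ [_ [_ [H _]]]]]; apply: H. Qed.

Lemma bis_normZ a x : E x -> N (fun t => a * x t) = `|a| * N x.
Proof. by case: bisE => _ [_ [_ [_ [_ [_ [H _]]]]]]; apply: H. Qed.

Lemma bis_normD x y : E x -> E y -> N (x \+ y) <= N x + N y.
Proof. by case: bisE => _ [_ [_ [_ [_ [_ [_ [H _]]]]]]]; apply: H. Qed.

Lemma bis_ideal x y : L0 x -> E y -> {ae mu, forall t, `|x t| <= `|y t|} ->
  E x /\ N x <= N y.
Proof. by case: bisE => _ [_ [_ [_ [_ [_ [_ [_ [H _]]]]]]]]; apply: H. Qed.

Lemma bis_complete u : (forall n, E (u n)) -> norm_cauchy N u ->
  exists2 x, E x & norm_cvg N u x.
Proof.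
case: bisE => _ [_ [_ [_ [_ [_ [_ [_ [_ H]]]]]]]] Eu /(H u Eu) [x [Ex ux]].
by exists x.
Qed.

Lemma bis_norm0 : N (fun=> 0) = 0.
Proof. by apply/(bis_norm_eq0 bis0); apply: aeW. Qed.

Lemma bis_idealW x y : L0 x -> E y -> (forall t, `|x t| <= `|y t|) ->
  E x /\ N x <= N y.
Proof. by move=> Lx Ey H; apply: bis_ideal => //; apply: aeW. Qed.

Lemma bis_ae_eq x y : L0 x -> E y -> {ae mu, forall t, x t = y t} ->
  E x /\ N x = N y.
Proof.
move=> Lx Ey xy.
have [Ex xley] : E x /\ N x <= N y by apply: bis_ideal => //; apply: filterS xy => t ->.
split => //; apply/eqP; rewrite eq_le xley /=.
by apply: (bis_ideal (bis_L0 Ey) Ex _).2; apply: filterS xy => t ->.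
Qed.

Lemma bisB x y : E x -> E y -> E (x \- y).
Proof.
move=> Ex Ey; have -> : x \- y = x \+ (fun t => -1 * y t).
  by apply: funext => t /=; rewrite mulN1r.
by apply: bisD => //; apply: bisZ.
Qed.

Lemma bis_normB x y : E x -> E y -> N (x \- y) <= N x + N y.
Proof.
move=> Ex Ey; have -> : x \- y = x \+ (fun t => -1 * y t).
  by apply: funext => t /=; rewrite mulN1r.
have -> : N y = N (fun t => -1 * y t) by rewrite bis_normZ // normrN1 mul1r.
by apply: bis_normD => //; apply: bisZ.
Qed.

Lemma bis_distC x y : E x -> E y -> N (x \- y) = N (y \- x).
Proof.
have dist_le a b : E a -> E b -> N (a \- b) <= N (b \- a).
  move=> Ea Eb; apply: (bis_idealW _ (bisB Eb Ea) _).2 => [|t /=].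
    by apply: measurable_funB; apply: bis_L0.
  by rewrite distrC.
by move=> Ex Ey; apply/eqP; rewrite eq_le !dist_le.
Qed.

Lemma bis_dist_triangle x y z : E x -> E y -> E z ->
  N (x \- z) <= N (x \- y) + N (y \- z).
Proof.
move=> Ex Ey Ez; have -> : x \- z = (x \- y) \+ (y \- z).
  by apply: funext => t /=; rewrite addrA subrK.
by apply: bis_normD; apply: bisB.
Qed.

Lemma bis_abs x : E x -> E (fun t => `|x t|) /\ N (fun t => `|x t|) <= N x.
Proof.
move=> Ex; apply: bis_idealW => // [|t]; last by rewrite normr_id.
exact: measurableT_comp (@normr_measurable _ _) (bis_L0 Ex).
Qed.

Lemma bis_sum (I : Type) (r : seq I) (g : I -> T -> R) : (forall i, E (g i)) ->
  E (fun t => \sum_(i <- r) g i t) /\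
  N (fun t => \sum_(i <- r) g i t) <= \sum_(i <- r) N (g i).
Proof.
move=> Eg; elim: r => [|a r [IH1 IH2]].
  have -> : (fun t => \sum_(i <- [::]) g i t) = fun=> 0.
    by apply: funext => t; rewrite big_nil.
  by rewrite big_nil bis_norm0; split => //; apply: bis0.
have -> : (fun t => \sum_(i <- a :: r) g i t) = g a \+ (fun t => \sum_(i <- r) g i t).
  by apply: funext => t; rewrite big_cons.
rewrite big_cons; split; first exact: bisD.
by apply: le_trans (bis_normD (Eg a) IH1) _; apply: lerD.
Qed.

Lemma bis_cvg_nondecreasing_ae_le (S : nat -> T -> R) s :
  (forall K, E (S K)) -> (forall K L t, (K <= L)%N -> S K t <= S L t) ->
  E s -> norm_cvg N S s -> forall K, {ae mu, forall t, S K t <= s t}.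
Proof.
move=> ES S_nd Es Ss K.
pose p t := Num.max (S K t - s t) 0.
have Lp : L0 p.
  by apply: measurable_maxr; [apply: measurable_funB; apply: bis_L0|].
have p_le L : (K <= L)%N -> E p /\ N p <= N (S L \- s).
  move=> KL; apply: bis_idealW => // [|t]; first exact: bisB.
  rewrite ger0_norm ?le_max ?lexx ?orbT // ge_max normr_ge0 andbT.
  by apply: le_trans (ler_norm _); rewrite lerB // S_nd.
have Ep := (p_le K (leqnn K)).1.
have Np0 : N p = 0.
  apply/eqP; rewrite eq_le bis_norm_ge0 // andbT leNgt; apply/negP => Np_gt0.
  have [n0 Hn0] := Ss _ Np_gt0.
  have := le_lt_trans (p_le _ (leq_maxl K n0)).2 (Hn0 _ (leq_maxr K n0)).
  by rewrite ltxx.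
apply: filterS ((bis_norm_eq0 Ep).1 Np0) => t pt0.
by rewrite -subr_le0 -pt0 le_max lexx.
Qed.

(* A Riesz-Fischer argument: the partial sums of |f k| form a Cauchy sequence,
   and its limit bounds all of them almost everywhere. *)
Lemma bis_abs_series_ae_bounded (f : nat -> T -> R) (c : nat -> R) :
  (forall k, E (f k)) -> (forall k, N (f k) <= c k - c k.+1) ->
  (forall k, 0 <= c k) ->
  (forall e, 0 < e -> exists n0, forall j, (n0 <= j)%N -> c j < e) ->
  exists s, {ae mu, forall t K, \sum_(0 <= k < K) `|f k t| <= s t}.
Proof.
move=> Ef Nf c_ge0 c_cvg0.
pose S K t := \sum_(0 <= k < K) `|f k t|.
have Eabs k := (bis_abs (Ef k)).1.
have ES K : E (S K) := (bis_sum (index_iota 0 K) Eabs).1.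
have S_nd K L t : (K <= L)%N -> S K t <= S L t.
  move=> KL; rewrite /S (big_cat_nat (leq0n K) KL) /= lerDl.
  by apply: sumr_ge0 => *; apply: normr_ge0.
have S_tail K L : (K <= L)%N -> N (S L \- S K) <= c K.
  move=> KL; have -> : S L \- S K = fun t => \sum_(K <= j < L) `|f j t|.
    by apply: funext => t; rewrite /S /= (big_cat_nat (leq0n K) KL) /= addrC addrK.
  apply: le_trans (bis_sum _ Eabs).2 _.
  apply: (@le_trans _ _ (\sum_(K <= j < L) (c j - c j.+1))).
    by apply: ler_sum => j _; apply: le_trans (bis_abs (Ef j)).2 (Nf j).
  rewrite (eq_bigr (fun j => - (c j.+1 - c j))) => [|j _]; last by rewrite opprB.
  by rewrite sumrN telescope_sumr // opprB lerBlDr lerDl.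
have [s Es Ss] : exists2 s, E s & norm_cvg N S s.
  apply: bis_complete => // e e_gt0; have [n0 Hn0] := c_cvg0 e e_gt0.
  exists n0 => m k m_ge k_ge; have [km|mk] := leqP k m.
    exact: le_lt_trans (S_tail _ _ km) (Hn0 _ k_ge).
  rewrite bis_distC //; exact: le_lt_trans (S_tail _ _ (ltnW mk)) (Hn0 _ m_ge).
exists s; apply: ae_foralln => K.
exact: bis_cvg_nondecreasing_ae_le ES S_nd Es Ss K.
Qed.

End BanachIdealSpace.

Lemma nat_mul_norm_bounded_eq0 (R : archiRealFieldType) (x M : R) :
  (forall K : nat, `|x| *+ K <= M) -> x = 0.
Proof.
move=> xM; apply/eqP; rewrite -normr_le0 leNgt; apply/negP => x_gt0. have M_ge0 : 0 <= M by have := xM 0%N; rewrite mulr0n.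
have := archi_boundP (divr_ge0 M_ge0 (ltW x_gt0)).
rewrite ltr_pdivrMr // mulr_natl => /lt_le_trans/(_ (xM _)).
by rewrite ltxx.
Qed.

Lemma inv_succ_eventually_lt (R : realType) (e : R) : 0 < e ->
  exists n0, forall j, (n0 <= j)%N -> j.+1%:R^-1 < e.
Proof.
move=> e_gt0; have [n0 _ n0_le] := near_infty_natSinv_lt (PosNum e_gt0).
by exists n0 => j /n0_le.
Qed.

(* Along a subsequence converging fast in both norms, the series of
   |u k - a| + |u k - b| has a.e. bounded partial sums, which forces a = b. *)
Lemma bis_cvg_ae_unique d (T : measurableType d) (R : realType)
    (mu : {measure set T -> \bar R}) E1 N1 E2 N2 (u : nat -> T -> R) a b :
  is_BIS mu E1 N1 -> is_BIS mu E2 N2 ->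
  (forall n, E1 (u n)) -> (forall n, E2 (u n)) -> E1 a -> E2 b ->
  norm_cvg N1 u a -> norm_cvg N2 u b -> {ae mu, forall t, a t = b t}.
Proof.
move=> bis1 bis2 Eu1 Eu2 Ea Eb ua ub.
pose c k : R := k.+1%:R^-1.
have c_ge0 k : 0 <= c k by rewrite invr_ge0.
have c_gap k : 0 < c k - c k.+1 by rewrite subr_gt0 ltf_pV2 ?posrE ?ltr_nat.
have /choice [phi phi_fast] : forall k, exists n,
    N1 (u n \- a) <= c k - c k.+1 /\ N2 (u n \- b) <= c k - c k.+1.
  move=> k; have [n1 h1] := ua _ (c_gap k); have [n2 h2] := ub _ (c_gap k).
  exists (maxn n1 n2); split; apply/ltW; [apply: h1 | apply: h2].
    exact: leq_maxl.
  exact: leq_maxr.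
have [s1 s1_ub] := bis_abs_series_ae_bounded bis1 (f := fun k => u (phi k) \- a)
  (fun k => bisB bis1 (Eu1 _) Ea) (fun k => (phi_fast k).1) c_ge0
  (@inv_succ_eventually_lt R).
have [s2 s2_ub] := bis_abs_series_ae_bounded bis2 (f := fun k => u (phi k) \- b)
  (fun k => bisB bis2 (Eu2 _) Eb) (fun k => (phi_fast k).2) c_ge0
  (@inv_succ_eventually_lt R).
apply: filterS2 s1_ub s2_ub => t h1 h2; apply/eqP; rewrite -subr_eq0; apply/eqP.
apply: (@nat_mul_norm_bounded_eq0 _ _ (s1 t + s2 t)) => K.
apply: le_trans (lerD (h1 K) (h2 K)).
rewrite -[K in _ *+ K]subn0 -sumr_const_nat -big_split /=.
by apply: ler_sum => k _; rewrite (distrC (u _ t)); apply: ler_distD.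
Qed.

Section Meet.
Context d (T : measurableType d) (R : realType) (mu : {measure set T -> \bar R}).

(* Membership includes a uniform bound on the norms, so that the supremum
   defining the norm is that of a bounded set. *)
Definition meet_set (F : set (BIS T R)) : set (T -> R) := fun x =>
  (forall V, F V -> bis_set V x) /\ exists M, forall V, F V -> bis_norm V x <= M.

Definition meet_norm (F : set (BIS T R)) (x : T -> R) : R :=
  sup [set r | exists2 V, F V & r = bis_norm V x].

Definition bis_meet (F : set (BIS T R)) : BIS T R :=
  MkBIS (meet_set F) (meet_norm F).

Variable F : set (BIS T R).

Lemma meet_norm_ub x V : meet_set F x -> F V -> bis_norm V x <= meet_norm F x.
Proof.
move=> [_ [M xM]] FV; apply: ub_le_sup; last by exists V.
by exists M => r [W FW ->]; apply: xM.
Qed.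

Lemma meet_sub1 V : F V -> sub1 (bis_meet F) V.
Proof. by move=> FV; split => x Fx /=; [apply: Fx.1 | apply: meet_norm_ub]. Qed.

Hypothesis F0 : F !=set0.

Lemma meet_norm_le x M : (forall V, F V -> bis_norm V x <= M) -> meet_norm F x <= M.
Proof.
move=> xM; apply: ge_sup => [|r [V FV ->]]; last exact: xM.
by have [V FV] := F0; exists (bis_norm V x), V.
Qed.

Lemma sub1_meet (E : BIS T R) : (forall V, F V -> sub1 E V) -> sub1 E (bis_meet F).
Proof.
move=> EF; split => x Ex /=; last by apply: meet_norm_le => V /EF [_]; apply.
split=> [V /EF [] EV _|]; first exact: EV.
by exists (bis_norm E x) => V /EF [_]; apply.
Qed.

Hypothesis bisF : forall V, F V -> is_BIS mu (bis_set V) (bis_norm V).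

Lemma meet_L0 x : meet_set F x -> L0 x.
Proof. by move=> [Fx _]; have [V FV] := F0; exact (bis_L0 (bisF FV) (Fx V FV)). Qed.

Lemma meet0 : meet_set F (fun=> 0).
Proof.
split=> [V /bisF /bis0 //|]; exists 0 => V FV.
by rewrite (bis_norm0 (bisF FV)).
Qed.

Lemma meetD x y : meet_set F x -> meet_set F y -> meet_set F (x \+ y).
Proof.
move=> [Fx [Mx xMx]] [Fy [My yMy]].
split=> [V FV|]; first exact (bisD (bisF FV) (Fx V FV) (Fy V FV)).
exists (Mx + My) => V FV.
apply: le_trans (bis_normD (bisF FV) (Fx V FV) (Fy V FV)) _.
by apply: lerD; [apply: xMx | apply: yMy].
Qed.

Lemma meetZ a x : meet_set F x -> meet_set F (fun t => a * x t).
Proof.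
move=> [Fx [M xM]]; split=> [V FV|]; first exact (bisZ (bisF FV) a (Fx V FV)).
exists (`|a| * M) => V FV; rewrite (bis_normZ (bisF FV)) //; last exact: Fx.
by apply: ler_wpM2l; [apply: normr_ge0 | apply: xM].
Qed.

Lemma meetB x y : meet_set F x -> meet_set F y -> meet_set F (x \- y).
Proof.
move=> Fx Fy; have -> : x \- y = x \+ (fun t => -1 * y t).
  by apply: funext => t /=; rewrite mulN1r.
by apply: meetD => //; apply: meetZ.
Qed.

Lemma meet_norm_ge0 x : meet_set F x -> 0 <= meet_norm F x.
Proof.
move=> Fx; have [V FV] := F0.
exact: le_trans (bis_norm_ge0 (bisF FV) (Fx.1 V FV)) (meet_norm_ub Fx FV).
Qed.

Lemma meet_norm_eq0 x : meet_set F x ->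
  (meet_norm F x = 0 <-> {ae mu, forall t, x t = 0}).
Proof.
move=> Fx; split => [x0|x_ae0].
  have [V FV] := F0; apply/(bis_norm_eq0 (bisF FV) (Fx.1 V FV)).
  apply/eqP; rewrite eq_le (bis_norm_ge0 (bisF FV) (Fx.1 V FV)) andbT -x0.
  exact: meet_norm_ub.
apply/eqP; rewrite eq_le meet_norm_ge0 // andbT; apply: meet_norm_le => V FV.
by rewrite ((bis_norm_eq0 (bisF FV) (Fx.1 V FV)).2 x_ae0).
Qed.

Lemma meet_normZ a x : meet_set F x ->
  meet_norm F (fun t => a * x t) = `|a| * meet_norm F x.
Proof.
move=> Fx; apply/eqP; rewrite eq_le; apply/andP; split.
  apply: meet_norm_le => V FV; rewrite (bis_normZ (bisF FV)); last exact: Fx.1.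
  by apply: ler_wpM2l; [apply: normr_ge0 | apply: meet_norm_ub].
have [->|a_neq0] := eqVneq a 0.
  by rewrite normr0 mul0r meet_norm_ge0 //; apply: meetZ.
have a_gt0 : 0 < `|a| by rewrite normr_gt0.
rewrite mulrC -ler_pdivlMr //; apply: meet_norm_le => V FV.
rewrite ler_pdivlMr // mulrC -(bis_normZ (bisF FV)); last exact: Fx.1.
by apply: meet_norm_ub => //; apply: meetZ.
Qed.

Lemma meet_normD x y : meet_set F x -> meet_set F y ->
  meet_norm F (x \+ y) <= meet_norm F x + meet_norm F y.
Proof.
move=> Fx Fy; apply: meet_norm_le => V FV.
apply: le_trans (bis_normD (bisF FV) (Fx.1 V FV) (Fy.1 V FV)) _.
by apply: lerD; apply: meet_norm_ub.
Qed.

Lemma meet_ideal x y : L0 x -> meet_set F y -> {ae mu, forall t, `|x t| <= `|y t|} ->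
  meet_set F x /\ meet_norm F x <= meet_norm F y.
Proof.
move=> Lx Fy xy.
have xyV V : F V -> bis_set V x /\ bis_norm V x <= bis_norm V y.
  by move=> FV; apply: (bis_ideal (bisF FV)) => //; apply: Fy.1.
have x_le V : F V -> bis_norm V x <= meet_norm F y.
  by move=> FV; apply: le_trans (xyV V FV).2 (meet_norm_ub Fy FV).
split; last exact: meet_norm_le.
by split=> [V /xyV []|]; last exists (meet_norm F y).
Qed.

Lemma meet_cauchy_cvg u : (forall n, meet_set F (u n)) ->
  norm_cauchy (meet_norm F) u ->
  exists x, forall V, F V -> bis_set V x /\ norm_cvg (bis_norm V) u x.
Proof.
move=> Fu u_cauchy; have [V0 FV0] := F0.
have cauchyV V : F V -> norm_cauchy (bis_norm V) u.
  move=> FV e e_gt0; have [n0 hn0] := u_cauchy e e_gt0; exists n0 => m k hm hk.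
  exact: le_lt_trans (meet_norm_ub (meetB (Fu m) (Fu k)) FV) (hn0 m k hm hk).
have [x V0x ux] := bis_complete (bisF FV0) (fun n => (Fu n).1 V0 FV0) (cauchyV V0 FV0).
exists x => V FV; have bisV := bisF FV; have Vu n := (Fu n).1 V FV.
have [y Vy uy] := bis_complete bisV Vu (cauchyV V FV).
have xy := bis_cvg_ae_unique (bisF FV0) bisV (fun n => (Fu n).1 V0 FV0) Vu V0x Vy ux uy.
have Lx := bis_L0 (bisF FV0) V0x.
split=> [|e e_gt0]; first exact: (bis_ae_eq bisV Lx Vy xy).1.
have [n0 hn0] := uy e e_gt0; exists n0 => m hm.
have uxy : {ae mu, forall t, (u m \- x) t = (u m \- y) t}.
  by apply: filterS xy => t /= ->.
have [_ ->] := bis_ae_eq bisV (measurable_funB (bis_L0 bisV (Vu m)) Lx)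
  (bisB bisV (Vu m) Vy) uxy.
exact: hn0.
Qed.

Lemma meet_cauchy_cvg_uniform u x : (forall n, meet_set F (u n)) ->
  norm_cauchy (meet_norm F) u ->
  (forall V, F V -> bis_set V x /\ norm_cvg (bis_norm V) u x) ->
  forall e, 0 < e -> exists n0, forall m, (n0 <= m)%N ->
    forall V, F V -> bis_norm V (u m \- x) <= e.
Proof.
move=> Fu u_cauchy ux e e_gt0; have e2_gt0 : 0 < e / 2 by rewrite divr_gt0.
have [n0 hn0] := u_cauchy _ e2_gt0; exists n0 => m hm V FV.
have [Vx /(_ _ e2_gt0) [n1 hn1]] := ux V FV.
pose k := maxn n0 n1.
apply: le_trans (bis_dist_triangle (bisF FV) ((Fu m).1 V FV) ((Fu k).1 V FV) Vx) _.
rewrite [e]splitr; apply: lerD; apply: ltW.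
  exact: le_lt_trans (meet_norm_ub (meetB (Fu m) (Fu k)) FV) (hn0 _ _ hm (leq_maxl _ _)).
exact: hn1 (leq_maxr _ _).
Qed.

Lemma meet_complete u : (forall n, meet_set F (u n)) ->
  norm_cauchy (meet_norm F) u ->
  exists x, meet_set F x /\ norm_cvg (meet_norm F) u x.
Proof.
move=> Fu u_cauchy; have [x ux] := meet_cauchy_cvg Fu u_cauchy.
have ux_unif := meet_cauchy_cvg_uniform Fu u_cauchy ux.
have Fx : meet_set F x.
  split=> [V /ux [] //|]; have [n0 hn0] := ux_unif 1 ltr01.
  exists (meet_norm F (u n0) + 1) => V FV; have [Vx _] := ux V FV.
  have Vu := (Fu n0).1 V FV.
  have -> : x = u n0 \- (u n0 \- x) by apply: funext => t /=; rewrite opprB addrC subrK.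
  apply: le_trans (bis_normB (bisF FV) Vu (bisB (bisF FV) Vu Vx)) _.
  by apply: lerD; [apply: meet_norm_ub | apply: hn0].
exists x; split => // e e_gt0.
have e2_gt0 : 0 < e / 2 by rewrite divr_gt0.
have [n0 hn0] := ux_unif _ e2_gt0; exists n0 => m hm.
by apply: le_lt_trans (meet_norm_le (hn0 m hm)) _; lra.
Qed.

Lemma meet_BIS : is_BIS mu (meet_set F) (meet_norm F).
Proof.
split; first exact: meet_L0.
split; first exact: meet0.
split; first exact: meetD.
split; first exact: meetZ.
split; first exact: meet_norm_ge0.
split; first exact: meet_norm_eq0.
split; first exact: meet_normZ.
split; first exact: meet_normD.
split; first exact: meet_ideal.
exact: meet_complete.
Qed.

End Meet.

Lemma meet_inJ d (T : measurableType d) (R : realType) (mu : {measure set T -> \bar R})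
    (F : set (BIS T R)) :
  F `<=` inJ mu -> F !=set0 -> inJ mu (bis_meet F).
Proof.
move=> FJ F0; have F1 : meet_set F (fun=> 1).
  split=> [V /FJ [] //|]; exists 1 => V /FJ [_ _ _ ->] //.
split => //=.
- by apply: meet_BIS => // V /FJ [].
- by move=> z Lz /(_ _ F1); apply: filterS => t; rewrite mulr1.
- apply/eqP; rewrite eq_le; apply/andP; split.
    by apply: meet_norm_le => // V /FJ [_ _ _ ->].
  by have [V FV] := F0; apply: le_trans (meet_norm_ub F1 FV); have [_ _ _ ->] := FJ V FV.
Qed.

Theorem theorem2 (d : measure_display) (T : measurableType d) (R : realType)
  (P : probability T R) :
  admissible P -> atomless P -> dedekind_complete_J P.
Proof.
move=> _ _; split.
- move=> S SJ _ [U [JU U_ub]].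
  pose G := [set V | inJ P V /\ is_upper S V].
  exists (bis_meet G); split.
  + by apply: meet_inJ; [move=> V [] | exists U].
  + by move=> E SE; apply: sub1_meet => [|V [_ V_ub]]; [exists U | apply: V_ub].
  + by move=> V JV V_ub; apply: meet_sub1.
- move=> S SJ S0 _; exists (bis_meet S); split.
  + exact: meet_inJ.
  + by move=> E SE; apply: meet_sub1.
  + by move=> V JV V_lb; apply: sub1_meet.
Qed.
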